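(* Let $n\geq 2$ with $n\neq 4$. Each of the following statements is equivalent to $d_n < \sqrt{2}\,(p_n)^{1/2}$: 1. $(p_{n+1}+d_n)\,p_n$ is the largest odd multiple of $p_n$ that is at most $p_{n+1}^2$. 2. The open interval $(p_n^2, p_{n+1}^2)$ contains exactly $d_n$ odd multiples of $p_n$. 3. $\displaystyle \frac{d_n}{2} + \sum_{i=1}^{d_n-1} i < p_n$.
   Context: $p_n$ denotes the $n$th prime ($p_1=2$) and $d_n := p_{n+1}-p_n$. *)

From HB Require Import structures.
From mathcomp Require Import all_boot all_order all_algebra.
From mathcomp Require Import reals.
Set Implicit Arguments. Unset Strict Implicit. Unset Printing Implicit Defensive.
Import Order.TTheory GRing.Theory Num.Theory.

Lemma exists_prime_above (m : nat) : exists p, (m < p) && prime p.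
Proof. by case: (prime_above m) => p H1 H2; exists p; rewrite H1 H2. Qed.

Definition next_prime (m : nat) : nat := ex_minn (exists_prime_above m).

(* p_ n = the n-th prime, 1-indexed: p_ 1 = 2, p_ 2 = 3, ... (p_ 0 = 1 is junk). *)
Definition p_ (n : nat) : nat := iter n next_prime 1.

Definition d_ (n : nat) : nat := p_ n.+1 - p_ n.

From mathcomp Require Import all_boot all_order all_algebra.
From mathcomp Require Import reals.
From mathcomp Require Import zify lra.
Import Order.TTheory GRing.Theory Num.Theory.

Set Implicit Arguments.
Unset Strict Implicit.
Unset Printing Implicit Defensive.

(* For n >= 2 the primes p = p_n and q = p_{n+1} = p + d are odd, so d = d_n is
   even and d^2 <> 2p: all three conditions amount to d^2 < 2p.  The odd
   multiples of p above p^2 are (p + 2j) p for j >= 1, and since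
   q^2 = (p + 2d) p + d^2, exactly d + floor((d^2 - 1) / 2p) of them lie below q^2; the
   d-th is (p + 2d) p = (q + d) p, and the next one, (p + 2d + 2) p, lies below q^2
   exactly when 2p < d^2.  Condition 3 is d^2 < 2p rewritten with
   2 (1 + 2 + ... + (d - 1)) + d = d^2. *)

Lemma next_prime_gt (m : nat) : m < next_prime m.
Proof. by rewrite /next_prime; case: ex_minnP => k /andP[]. Qed.

Lemma prime_next_prime (m : nat) : prime (next_prime m).
Proof. by rewrite /next_prime; case: ex_minnP => k /andP[]. Qed.

Lemma p_S (n : nat) : p_ n.+1 = next_prime (p_ n).
Proof. by rewrite /p_ iterS. Qed.

Lemma ltn_p (n : nat) : p_ n < p_ n.+1.
Proof. by rewrite p_S next_prime_gt. Qed.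

Lemma index_lt_p (n : nat) : n < p_ n.
Proof. by elim: n => [|n IHn] //; apply: leq_ltn_trans IHn (ltn_p n). Qed.

Lemma prime_p (n : nat) : 0 < n -> prime (p_ n).
Proof. by case: n => // n _; rewrite p_S prime_next_prime. Qed.

Lemma odd_p (n : nat) : 1 < n -> odd (p_ n).
Proof.
move=> n_gt1; have [p_eq2|//] := even_prime (prime_p (ltnW n_gt1)).
by have := index_lt_p n; rewrite p_eq2; lia.
Qed.

Lemma pSE (n : nat) : p_ n.+1 = p_ n + d_ n.
Proof. by rewrite /d_ subnKC // ltnW // ltn_p. Qed.

Lemma d_gt0 (n : nat) : 0 < d_ n.
Proof. by rewrite subn_gt0 ltn_p. Qed.

Lemma even_d (n : nat) : 1 < n -> ~~ odd (d_ n).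
Proof.
move=> n_gt1; have := @odd_p n.+1 (ltnW n_gt1).
by rewrite pSE oddD odd_p // => /negPf->.
Qed.

Lemma sqr_even_neq_double_odd (p d : nat) : odd p -> ~~ odd d -> d ^ 2 != 2 * p.
Proof.
move=> p_odd d_even; have /dvdnP[c ->] : 2 %| d by rewrite dvdn2.
apply/eqP => sqr_eq; have p_eq : p = 2 * c ^ 2 by move: sqr_eq; rewrite expnMn; lia.
by move: p_odd; rewrite p_eq oddM.
Qed.

Lemma card_ord_pred (N : nat) (a : pred nat) :
  #|[set k : 'I_N | a k]| = count a (iota 0 N).
Proof.
have -> : iota 0 N = index_iota 0 N by rewrite /index_iota subn0.
by rewrite cardsE -sum1_card -sum1_count big_mkord.
Qed.

Section OddMultiples.

Variable p : nat.
Hypothesis p_odd : odd p.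

Let p_gt0 : 0 < p. Proof. exact: odd_gt0. Qed.

Lemma largest_odd_multipleP (a N : nat) : odd a -> a * p <= N ->
  [/\ odd (a * p), p %| a * p, a * p <= N
    & forall k, odd k -> p %| k -> k <= N -> k <= a * p] <-> N < a.+2 * p.
Proof.
move=> a_odd aP_le_N; split=> [[_ _ _ is_max] | N_lt].
  rewrite ltnNge; apply/negP => next_le_N.
  have := is_max (a.+2 * p); rewrite oddM /= a_odd p_odd dvdn_mull // next_le_N.
  by rewrite leq_pmul2r // => /(_ isT isT isT); lia.
have aP_odd : odd (a * p) by rewrite oddM a_odd.
split=> // [|k k_odd /dvdnP[m k_eq] mP_le_N]; first exact: dvdn_mull.
move: k_odd mP_le_N; rewrite k_eq oddM => /andP[m_odd _] mP_le_N.
have m_lt : m < a.+2 by rewrite -(ltn_pmul2r p_gt0); apply: leq_ltn_trans N_lt.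
have := odd_double_half m; have := odd_double_half a; rewrite m_odd a_odd.
by rewrite leq_pmul2r //; lia.
Qed.

Lemma odd_multiple_gt_sqrP (k : nat) :
  reflect (exists j, k = (p + 2 * j.+1) * p) [&& p ^ 2 < k, odd k & p %| k].
Proof.
apply: (iffP and3P) => [[k_gt k_odd /dvdnP[m k_eq]] | [j ->]].
  move: k_gt k_odd; rewrite k_eq expnS expn1 ltn_pmul2r // oddM => m_gt /andP[m_odd _].
  have := odd_double_half m; have := odd_double_half p; rewrite m_odd p_odd.
  by exists (m./2 - p./2).-1; congr (_ * _); lia.
split; last exact: dvdn_mull.
  by rewrite expnS expn1 ltn_pmul2r //; lia.
by rewrite oddM oddD p_odd oddM.
Qed.

Lemma card_odd_multiples_gt_sqr (N m : nat) :
  (forall j, ((p + 2 * j.+1) * p < N) = (j < m)) ->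
  #|[set k : 'I_N | [&& p ^ 2 < k, odd k & p %| k]]| = m.
Proof.
move=> lt_N; set f := fun j => (p + 2 * j.+1) * p.
have f_inj : injective f by move=> i j /eqP; rewrite eqn_pmul2r // => /eqP; lia.
rewrite (card_ord_pred _ (fun k => [&& p ^ 2 < k, odd k & p %| k])).
rewrite -size_filter -(size_iota 0 m) -(size_map f (iota 0 m)).
apply/perm_size/uniq_perm; first exact: filter_uniq (iota_uniq 0 N).
  by rewrite map_inj_uniq ?iota_uniq.
move=> k; rewrite mem_filter mem_iota /=; apply/andP/mapP.
  case=> /odd_multiple_gt_sqrP[j ->] f_lt; exists j => //.
  by rewrite mem_iota -lt_N; lia.
case=> j; rewrite mem_iota /= -lt_N => f_lt ->; split; last by rewrite add0n.
by apply/odd_multiple_gt_sqrP; exists j.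
Qed.

End OddMultiples.

Lemma odd_multiple_lt_sqr_addn (p d j : nat) : 0 < p -> 0 < d ->
  ((p + 2 * j.+1) * p < (p + d) ^ 2) = (j < d + (d ^ 2).-1 %/ (2 * p)).
Proof.
move=> p_gt0 d_gt0; have dd_gt0 : 0 < d ^ 2 by rewrite expn_gt0 d_gt0.
have pp_gt0 : 0 < 2 * p by rewrite muln_gt0.
rewrite -divnMDl // leq_divRL //.
by move: dd_gt0; rewrite !expnS expn0; lia.
Qed.

Lemma sqr_addn_ltn_next_odd_multiple (p d : nat) :
  ((p + d) ^ 2 < (p + d + d).+2 * p) = (d ^ 2 < 2 * p).
Proof. by rewrite !expnS expn0; lia. Qed.

Section PrimeGap.

Variables p d : nat.
Hypotheses (p_odd : odd p) (d_even : ~~ odd d) (d_gt0 : 0 < d).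

Lemma largest_odd_multiple_below_sqr_iff :
  [/\ odd ((p + d + d) * p), p %| (p + d + d) * p, (p + d + d) * p <= (p + d) ^ 2
    & forall k, odd k -> p %| k -> k <= (p + d) ^ 2 -> k <= (p + d + d) * p]
  <-> d ^ 2 < 2 * p.
Proof.
rewrite -sqr_addn_ltn_next_odd_multiple; apply: largest_odd_multipleP => //.
  by rewrite !oddD p_odd (negPf d_even).
by rewrite !expnS expn0; lia.
Qed.

Lemma card_odd_multiples_between_sqr :
  #|[set k : 'I_((p + d) ^ 2) | [&& p ^ 2 < k, odd k & p %| k]]|
    = d + (d ^ 2).-1 %/ (2 * p).
Proof.
apply: (card_odd_multiples_gt_sqr p_odd) => j.
by apply: odd_multiple_lt_sqr_addn => //; exact: odd_gt0.
Qed.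

Lemma card_odd_multiples_between_sqr_iff :
  #|[set k : 'I_((p + d) ^ 2) | [&& p ^ 2 < k, odd k & p %| k]]| = d
  <-> d ^ 2 < 2 * p.
Proof.
have pp_gt0 : 0 < 2 * p by rewrite muln_gt0 (odd_gt0 p_odd).
rewrite card_odd_multiples_between_sqr ltn_neqAle sqr_even_neq_double_odd //=.
split=> [/eqP | dd_le].
  by rewrite -[X in _ == X]addn0 eqn_add2l -leqn0 leqNgt divn_gt0 // -ltnNge; lia.
by rewrite divn_small ?addn0 //; lia.
Qed.

End PrimeGap.

Lemma double_sum_lt_add (d : nat) : (\sum_(1 <= i < d) i).*2 + d = d ^ 2.
Proof.
elim: d => [|[|d] IHd]; [by rewrite big_geq | by rewrite big_geq |].
by rewrite big_nat_recr //= doubleD; move: IHd; rewrite !expnS expn0; lia.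
Qed.

Local Open Scope ring_scope.

Lemma ltr_sqrt2_sqrt_nat (R : rcfType) (d p : nat) :
  ((d%:R : R) < Num.sqrt 2 * Num.sqrt p%:R) = (d ^ 2 < 2 * p)%N.
Proof.
have [->|p_gt0] := posnP p; first by rewrite sqrtr0 mulr0 ltrn0 muln0.
rewrite -sqrtrM ?ler0n // -[X in X < _](ger0_norm (ler0n R d)) -sqrtr_sqr.
by rewrite ltr_sqrt ?mulr_gt0 ?ltr0n // -natrX -natrM ltr_nat.
Qed.

Lemma half_add_sum_ltr_nat (R : realFieldType) (d p : nat) :
  ((d%:R : R) / 2 + \sum_(1 <= i < d) (i%:R : R) < p%:R) = (d ^ 2 < 2 * p)%N.
Proof.
rewrite -natr_sum -(ltr_nat R) -double_sum_lt_add natrD -muln2 !natrM.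
by apply/idP/idP => ?; lra.
Qed.

Theorem theorem2p8 (R : realType) (n : nat) :
  (2 <= n)%N -> n <> 4%N ->
  let p := p_ n in let q := p_ n.+1 in let d := d_ n in
  let A := (d%:R : R) < Num.sqrt 2 * Num.sqrt (p%:R) in
  (A <->
     [/\ odd ((q + d) * p), (p %| (q + d) * p)%N, ((q + d) * p <= q ^ 2)%N
       & forall k : nat, odd k -> (p %| k)%N -> (k <= q ^ 2)%N ->
           (k <= (q + d) * p)%N])
  /\
  (A <-> #|[set k : 'I_(q ^ 2) | [&& (p ^ 2 < k)%N, odd k & (p %| k)%N]]| = d)
  /\
  (A <-> (d%:R / 2 + \sum_(1 <= i < d) (i%:R : R) < p%:R)).
Proof.
move=> n_gt1 _ p q d A.
have p_odd : odd p := odd_p n_gt1.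
have d_even : ~~ odd d := even_d n_gt1.
have d_pos : (0 < d)%N := d_gt0 n.
rewrite /A ltr_sqrt2_sqrt_nat half_add_sum_ltr_nat /q pSE -/p -/d.
split; [|split] => //; apply: iff_sym.
  exact: largest_odd_multiple_below_sqr_iff.
exact: card_odd_multiples_between_sqr_iff.
Qed.
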